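(* Let $a,b\ge1$ and $P=[a]\times[b]$. Then $\sum_{p\in P}T_p^-\equiv^q \frac{[a]_q[b]_q}{[a+b]_q}$.
   Context: $[a]\times[b]=\{(i,j)\colon1\le i\le a,1\le j\le b\}$ with $(i,j)\le(i',j')$ iff $i\le i'$ and $j\le j'$. $\mathcal{J}(P)$ is the set of order ideals. For $p\in P$, $I\in\mathcal{J}(P)$: $T_p^+(I)=1$ if $p$ is minimal in $P\setminus I$, else $0$; $T_p^-(I)=1$ if $p$ is maximal in $I$, else $0$; $T_p^q=T_p^+-qT_p^-$ with $q$ an indeterminate. For $f,g\colon\mathcal{J}(P)\to\mathbb{R}(q)$, $f\equiv^q g$ means $f-g=\sum_{p\in P}c_p(q)T_p^q$ for some $c_p(q)\in\mathbb{R}(q)$; an element of $\mathbb{R}(q)$ denotes a constant function. $[m]_q=1+q+\dots+q^{m-1}$. *)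

From HB Require Import structures.
From mathcomp Require Import all_boot all_order all_algebra.
From mathcomp Require Import fraction.
From mathcomp Require Import reals.
Set Implicit Arguments. Unset Strict Implicit. Unset Printing Implicit Defensive.
Import Order.TTheory GRing.Theory Num.Theory.
Local Open Scope ring_scope.

Definition ratfun (R : realType) := {fraction {poly R}}.
Definition qvar (R : realType) : ratfun R := tofrac ('X : {poly R}).

Definition qint (R : realType) (m : nat) : ratfun R := \sum_(i < m) (qvar R) ^+ i.

(* The poset [a] x [b], encoded 0-indexed as 'I_a * 'I_b, product order. *)
Definition gridP (a b : nat) := ('I_a * 'I_b)%type.
Definition grid_le (a b : nat) (x y : gridP a b) : bool :=
  ((x.1 <= y.1)%N && (x.2 <= y.2)%N).

Section Toggles.
Variables (T : finType) (le : rel T) (K : fieldType).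

Definition is_ideal (I : {set T}) : bool :=
  [forall x, forall y, ((y \in I) && le x y) ==> (x \in I)].

Definition lt_ (x y : T) : bool := (x != y) && le x y.

Definition Tplus (p : T) (I : {set T}) : K :=
  ((p \notin I) && [forall y, (y \notin I) ==> ~~ lt_ y p])%:R.

Definition Tminus (p : T) (I : {set T}) : K :=
  ((p \in I) && [forall y, (y \in I) ==> ~~ lt_ p y])%:R.

Definition Tq (q : K) (p : T) (I : {set T}) : K := Tplus p I - q * Tminus p I.

Definition qequiv (q : K) (f g : {set T} -> K) : Prop :=
  exists c : T -> K, forall I : {set T}, is_ideal I ->
    f I - g I = \sum_(p : T) c p * Tq q p I.
End Toggles.

From HB Require Import structures.
From mathcomp Require Import all_boot all_order all_algebra.
From mathcomp Require Import fraction.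
From mathcomp Require Import reals.
From mathcomp Require Import ring zify.
Import Order.TTheory GRing.Theory Num.Theory.
Local Open Scope ring_scope.

(* An order ideal of [a] x [b] is a Young diagram with row lengths
   lambda_0 >= ... >= lambda_(a-1): its maximal elements are the outer corners
   and the minimal elements of its complement the inner corners of its boundary
   path from (0, b) to (a, 0).  For an additive weight w (i, j) = F i + G j
   vanishing at both ends of the path, the sum of w (i + 1, j + 1) over outer
   corners minus the sum of w (i, j) over inner corners telescopes row by row to
   G b - G 0.  The weight w (i, j) = [i]_q [b]_q + [j]_q [a]_q - [a]_q [b]_q
   satisfies w (i + 1, j + 1) = [a + b]_q + q w (i, j), so that
   [a + b]_q * sum_p T_p^- - sum_p w p T_p^q is such an alternating sum, equal
   to [a]_q [b]_q; hence c_p = w p / [a + b]_q works. *)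

Lemma sum_ord_pick (K : pzSemiRingType) n m (c : bool) (g : nat -> K) :
    (c -> m < n)%N ->
  \sum_(j < n) ((j == m :> nat) && c)%:R * g j = c%:R * g m.
Proof.
case: c => [/(_ isT) lt_mn | _]; last first.
  by rewrite mul0r big1 // => j _; rewrite andbF mul0r.
rewrite (bigD1 (Ordinal lt_mn)) //= eqxx mul1r big1 ?addr0 // => j neq_jm.
rewrite andbT (_ : (j == m :> nat) = false) ?mul0r //.
by apply: contraNF neq_jm => /eqP jm; apply/eqP/val_inj.
Qed.

Section GridIdeal.
Context {a b : nat} {I : {set gridP a b}}.
Hypothesis idealI : is_ideal (@grid_le a b) I.
Local Notation le := (@grid_le a b).

Lemma ideal_downward {x y : gridP a b} : y \in I -> le x y -> x \in I.
Proof.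
by move=> yI lexy; move/forallP/(_ x)/forallP/(_ y): idealI; rewrite yI lexy.
Qed.

(* [lambda k] is the length of row [k - 1] of [I]; the virtual row [-1] has
   full length [b]. *)
Definition lambda (k : nat) : nat :=
  if k is i.+1 then (\max_(p in I | p.1 == i :> nat) p.2.+1)%N else b.
Arguments lambda : simpl never.

Lemma mem_ideal (p : gridP a b) : (p \in I) = (p.2 < lambda p.1.+1)%N.
Proof.
apply/idP/idP => [pI | ]; first by apply: (leq_bigmax_cond p); rewrite pI eqxx.
apply: contraLR => pNI; rewrite -leqNgt; apply/bigmax_leqP => y /andP[yI /eqP y1].
rewrite ltnNge; apply: contra pNI => le_p2; apply: (ideal_downward yI).
by rewrite /grid_le y1 leqnn le_p2.
Qed.

Lemma lambda_le k : (lambda k <= b)%N.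
Proof. by case: k => [|i] //; apply/bigmax_leqP => y _; apply: ltn_ord. Qed.

Lemma lambda_out k : (a < k)%N -> lambda k = 0%N.
Proof.
case: k => [|i] //= lt_ai; apply/eqP; rewrite -leqn0; apply/bigmax_leqP.
by move=> y /andP[_ /eqP y1]; have := ltn_ord y.1; rewrite y1; lia.
Qed.

Lemma lambda_nonincr i j : (i <= j)%N -> (lambda j <= lambda i)%N.
Proof.
case: i => [|i]; first by move=> _; apply: lambda_le.
case: j => [//|j]; rewrite ltnS => le_ij; apply/bigmax_leqP => y /andP[yI /eqP y1].
have lt_ia : (i < a)%N by have := ltn_ord y.1; rewrite y1; lia.
have /= <- := mem_ideal (Ordinal lt_ia, y.2).
by apply: (ideal_downward yI); rewrite /grid_le y1 le_ij leqnn.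
Qed.

Lemma lt_grid (x y : gridP a b) :
  lt_ le x y = le x y && ((x.1 < y.1) || (x.2 < y.2))%N.
Proof.
rewrite /lt_ /grid_le andbC; case: x y => [x1 x2] [y1 y2] /=.
rewrite xpair_eqE -!val_eqE /=; case: (leqP x1 y1); case: (leqP x2 y2) => //=; lia.
Qed.

Lemma Tminus_grid (K : fieldType) (p : gridP a b) :
  Tminus le K p I =
  ((p.2.+1 == lambda p.1.+1) && (lambda p.1.+2 < lambda p.1.+1))%N%:R.
Proof.
congr ((nat_of_bool _)%:R); case: p => i j; rewrite mem_ideal /=.
apply/andP/andP.
- move=> [jI /forallP maxp].
  have nothing_above (y : gridP a b) : (y.2 < lambda y.1.+1)%N ->
      ~~ ((i <= y.1) && (j <= y.2) && ((i < y.1) || (j < y.2)))%N.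
    by move=> yI; have := implyP (maxp y); rewrite mem_ideal lt_grid; apply.
  have le_row : (lambda i.+1 <= j.+1)%N.
    rewrite leqNgt; apply/negP => lt_j.
    have lt_jb : (j.+1 < b)%N by have := lambda_le i.+1; lia.
    have := nothing_above (i, Ordinal lt_jb); rewrite /=; lia.
  have le_next : (lambda i.+2 <= j)%N.
    rewrite leqNgt; apply/negP => lt_j.
    have lt_ia : (i.+1 < a)%N.
      by apply: contraTT lt_j; rewrite -leqNgt => le_ai; rewrite lambda_out.
    have := nothing_above (Ordinal lt_ia, j); rewrite /=; lia.
  by split; [rewrite eqn_leq jI le_row | lia].
- move=> [/eqP row_end lt_next]; split; first by rewrite -row_end.
  apply/forallP => -[y1 y2]; apply/implyP; rewrite mem_ideal lt_grid /grid_le /=.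
  have := @lambda_nonincr i.+1 y1.+1; have := @lambda_nonincr i.+2 y1.+1.
  move=> mono2 mono1 y_in; apply/negP; lia.
Qed.

Lemma Tplus_grid (K : fieldType) (p : gridP a b) :
  Tplus le K p I =
  ((p.2 == lambda p.1.+1 :> nat) && (lambda p.1.+1 < lambda p.1))%N%:R.
Proof.
congr ((nat_of_bool _)%:R); case: p => i j.
rewrite mem_ideal -leqNgt /=; apply/andP/andP.
- move=> [jNI /forallP minp].
  have nothing_below (y : gridP a b) : (lambda y.1.+1 <= y.2)%N ->
      ~~ ((y.1 <= i) && (y.2 <= j) && ((y.1 < i) || (y.2 < j)))%N.
    by move=> yNI; have := implyP (minp y); rewrite mem_ideal -leqNgt lt_grid; apply.
  have le_row : (j <= lambda i.+1)%N.
    rewrite leqNgt; apply/negP => lt_j.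
    have lt_jb : (j.-1 < b)%N by have := ltn_ord j; lia.
    have := nothing_below (i, Ordinal lt_jb); rewrite /=; lia.
  split; first by rewrite eqn_leq le_row jNI.
  case: (nat_of_ord i) (ltn_ord i) jNI nothing_below => [_ jNI _ | i' lt_ia jNI below].
    by have := ltn_ord j; rewrite [lambda 0]/lambda; lia.
  rewrite ltnNge; apply/negP => le_prev.
  have := below (Ordinal (ltnW lt_ia), j); rewrite /=.
  have := leq_trans le_prev jNI; lia.
- move=> [/eqP row_end lt_prev]; split; first by rewrite row_end.
  apply/forallP => -[y1 y2]; apply/implyP.
  rewrite mem_ideal -leqNgt lt_grid /grid_le /=.
  have := @lambda_nonincr y1.+1 i; have := @lambda_nonincr y1.+1 i.+1.
  move=> mono1 mono0 y_out; apply/negP; lia.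
Qed.

Lemma sum_row_Tminus (K : fieldType) (i : 'I_a) (g : nat -> K) :
  \sum_(j < b) Tminus le K (i, j) I * g j.+1 =
  (lambda i.+2 < lambda i.+1)%N%:R * g (lambda i.+1).
Proof.
under eq_bigr do rewrite Tminus_grid /=.
case E: (lambda i.+1) => [|m].
  by rewrite ltn0 mul0r big1 // => j _; rewrite andbF mul0r.
under eq_bigr do rewrite eqSS.
by apply: (@sum_ord_pick _ _ _ _ (fun k => g k.+1)) => _; have := lambda_le i.+1; lia.
Qed.

Lemma sum_row_Tplus (K : fieldType) (i : 'I_a) (g : nat -> K) :
  \sum_(j < b) Tplus le K (i, j) I * g j =
  (lambda i.+1 < lambda i)%N%:R * g (lambda i.+1).
Proof.
under eq_bigr do rewrite Tplus_grid /=.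
by apply: sum_ord_pick => lt_prev; apply: leq_trans lt_prev (lambda_le i).
Qed.

Lemma corner_sum {K : fieldType} {F G : nat -> K} :
    F 0%N + G b = 0 -> F a + G 0%N = 0 ->
  \sum_(p : gridP a b) (Tminus le K p I * (F p.1.+1 + G p.2.+1)
                        - Tplus le K p I * (F p.1 + G p.2)) = G b - G 0%N.
Proof.
move=> weight_0b weight_a0.
pose c k : K := (lambda k.+1 < lambda k)%N%:R.
(* The outer corner of row [i] is weighted at [(i + 1, lambda i.+1)], the inner
   corner of row [i + 1] at [(i + 1, lambda i.+2)]: the weights differ only in
   their [G]-part, so with this correction row [i] contributes [u i.+1 - u i]. *)
pose u k := c k * (F k + G (lambda k.+1)) - G (lambda k.+1).
have G_step k :
    c k * G (lambda k) = c k * G (lambda k.+1) + G (lambda k) - G (lambda k.+1).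
  rewrite /c; case: ltnP => [_ | le_k]; first by rewrite !mul1r; ring.
  have -> : lambda k.+1 = lambda k by apply/anti_leq; rewrite le_k lambda_nonincr.
  by rewrite addrK.
have row (i : 'I_a) : \sum_(j < b) (Tminus le K (i, j) I * (F i.+1 + G j.+1)
                        - Tplus le K (i, j) I * (F i + G j)) = u i.+1 - u i.
  rewrite sumrB (sum_row_Tminus _ i (fun k => F i.+1 + G k)).
  rewrite (sum_row_Tplus _ i (fun k => F i + G k)) -/(c i.+1) -/(c i) /u.
  by rewrite [in LHS]mulrDr G_step; ring.
have u_end : u a = - G 0%N by rewrite /u lambda_out // weight_a0 mulr0 sub0r.
have u_start : u 0%N = - G b.
  have F0 : F 0%N = - G b by apply/eqP; rewrite -addr_eq0 weight_0b.
  by have := G_step 0%N; rewrite [lambda 0]/lambda /u F0 mulrDr mulrN => ->; ring.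
transitivity (\sum_(i < a) (u i.+1 - u i)).
  by rewrite -(eq_bigr _ (fun i _ => row i)) pair_bigA; apply: eq_bigr => -[].
rewrite -(big_mkord xpredT (fun i => u i.+1 - u i)) telescope_sumr //.
by rewrite u_end u_start opprK addrC.
Qed.

End GridIdeal.

Section QInteger.
Variable R : realType.
Local Notation q := (qvar R).
Local Notation qint := (qint R).

Lemma qint0 : qint 0 = 0.
Proof. by rewrite /qint big_ord0. Qed.

Lemma qint1 : qint 1 = 1.
Proof. by rewrite /qint big_ord1 expr0. Qed.

Lemma qintD m n : qint (m + n) = qint m + q ^+ m * qint n.
Proof.
rewrite /qint big_split_ord mulr_sumr; congr (_ + _).
by apply: eq_bigr => i _; rewrite exprD.
Qed.

Lemma qintS n : qint n.+1 = 1 + q * qint n.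
Proof. by rewrite -add1n qintD qint1 expr1. Qed.

Lemma qvarX m : q ^+ m = 1 + q * qint m - qint m.
Proof.
have := qintD m 1; rewrite addn1 qintS qint1 mulr1 => ->.
by rewrite addrAC subrr add0r.
Qed.

Lemma qint_neq0 m : (0 < m)%N -> qint m != 0.
Proof.
move=> m_gt0; have -> : qint m = tofrac (\sum_(i < m) 'X^i).
  by rewrite rmorph_sum; apply: eq_bigr => i _; rewrite rmorphXn.
rewrite tofrac_eq0; apply: contraTneq m_gt0 => /(congr1 (horner^~ 1)).
rewrite horner0 horner_sum; under eq_bigr do rewrite hornerXn expr1n.
by rewrite sumr_const card_ord => /eqP; rewrite pnatr_eq0 => /eqP ->.
Qed.

End QInteger.

Theorem theorem5p11 (R : realType) (a b : nat) (ha : (1 <= a)%N) (hb : (1 <= b)%N) :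
  qequiv (@grid_le a b) (qvar R)
    (fun I => \sum_(p : gridP a b) Tminus (@grid_le a b) (ratfun R) p I)
    (fun _ => qint R a * qint R b / qint R (a + b)).
Proof.
pose F i := qint R i * qint R b.
pose G j := qint R j * qint R a - qint R a * qint R b.
have D_neq0 : qint R (a + b) != 0 by apply: qint_neq0; rewrite addn_gt0 ha.
have shift i j : F i.+1 + G j.+1 = qint R (a + b) + qvar R * (F i + G j).
  by rewrite /F /G !qintS qintD qvarX; ring.
have weight_0b : F 0%N + G b = 0 by rewrite /F /G qint0; ring.
have weight_a0 : F a + G 0%N = 0 by rewrite /F /G qint0; ring.
have -> : qint R a * qint R b = G b - G 0%N by rewrite /G qint0; ring.
exists (fun p : gridP a b => (F p.1 + G p.2) / qint R (a + b)) => I idealI.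
apply: (mulIf D_neq0); rewrite mulrBl divfK // !mulr_suml.
under [RHS]eq_bigr do rewrite mulrAC divfK //.
rewrite -(corner_sum idealI weight_0b weight_a0) -sumrB; apply: eq_bigr => p _.
by rewrite /Tq shift; ring.
Qed.
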